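(* Let $\mathcal S$ be a $\Rsh$-closed $\diamond\cap$-closed subset of a finite multi-algebra $\mathcal A=\mathcal A_1\times\cdots\times\mathcal A_m$. If for all distinct $i,j\in\{1,\dots,m\}$ every network with only three variables over the bi-slice $\mathcal S_{i,j}$ is dissociable, then $\mathcal S$ is dissociable.
   Context: A finite non-associative algebra is a tuple $(\mathcal A,\cup,\neg,\emptyset,\mathcal B,\diamond,\overline{\cdot},e)$ where $(\mathcal A,\cup,\neg,\emptyset,\mathcal B)$ is a finite Boolean algebra (with $x\cap y=\neg(\neg x\cup\neg y)$) and for all $x,y,z$: $\overline{\overline x}=x$, $\overline{x\cup y}=\overline x\cup\overline y$, $\overline{x\diamond y}=\overline y\diamond\overline x$, $e\diamond x=x\diamond e=x$, $x\diamond(y\cup z)=(x\diamond y)\cup(x\diamond z)$, $(x\diamond y)\cap\overline z=\emptyset\iff(y\diamond z)\cap\overline x=\emptyset$. $r\subseteq r'$ means $r\cup r'=r'$. A projection operator from $\mathcal A$ to $\mathcal A'$ is a map $\Rsh$ with $\Rsh(r\cup r')=\Rsh r\cup\Rsh r'$ and $\Rsh\overline r=\overline{\Rsh r}$. A finite multi-algebra is a product $\mathcal A_1\times\cdots\times\mathcal A_m$ of finite non-associative algebras with projection operators $\Rsh_i^j:\mathcal A_i\to\mathcal A_j$ for all distinct $i,j$; $\subseteq,\diamond,\cap,\overline{\cdot}$ on relations $R=(R_1,\dots,R_m)$ componentwise. $R$ is closed under projection if $R_j\subseteq\Rsh_i^jR_i$ for all distinct $i,j$; the projection closure $\Rsh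 R$ is obtained by repeatedly replacing $R_j$ by $R_j\cap\Rsh_i^jR_i$ until a fixed point. A network over $\mathcal S\subseteq\mathcal A$ is a finite set $E$ of variables with $N^{xy}\in\mathcal S$ for all distinct $x,y\in E$, $N^{yx}=\overline{N^{xy}}$; $N_i^{xy}=(N^{xy})_i$. $N$ is trivially inconsistent if some $N_i^{xy}=\emptyset$; closed under composition if $N^{xz}\subseteq N^{xy}\diamond N^{yz}$ for all distinct $x,y,z$; closed under projection if all $N^{xy}$ are; algebraically consistent if closed under both and not trivially inconsistent. $N$ is dissociable if replacing each $N^{xy}$ by $\Rsh N^{xy}$ and then closing under composition (repeating $N^{xz}\leftarrow N^{xz}\cap(N^{xy}\diamond N^{yz})$ to a fixed point) yields a network that is algebraically consistent or trivially inconsistent; a subset is dissociable if every network over it is. $\mathcal S$ is $\diamond\cap$-closed if $(R\diamond R')\cap R''\in\mathcal S$ for all $R,R',R''\in\mathcal S$, and $\Rsh$-closed if $\Rsh R\in\mathcal S$ for all $R\in\mathcal S$. The bi-slice $\mathcal A_{i,j}$ is the multi-algebra $\mathcal A_i\times\mathcal A_j$ with projections $\Rsh_i^j,\Rsh_j^i$; the bi-slice of $\mathcal S$ is $\mathcal S_{i,j}=\{(R_i,R_j):R\in\mathcal S\}\subseteq\mathcal A_{i,j}$. *)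

From HB Require Import structures.
From mathcomp Require Import all_boot all_order.

Set Implicit Arguments.
Unset Strict Implicit.
Unset Printing Implicit Defensive.

Import Order.Theory.
Local Open Scope order_scope.

(* The underlying finite Boolean algebra
   (A, ∪, ¬, ∅, B) is a finite complemented distributive lattice with top and
   bottom: ∪ = join `|`, ¬ = compl ~`, ∅ = \bot, B = \top, and
   x ∩ y = ¬(¬x ∪ ¬y) is the lattice meet `&`. *)
Record nalg := NAlg {
  ndisp : Order.disp_t;
  ncar : finCTBDistrLatticeType ndisp;
  ncomp : ncar -> ncar -> ncar;
  nconv : ncar -> ncar;
  nid : ncar;
  nconvK : forall x, nconv (nconv x) = x;
  nconvU : forall x y, nconv (x `|` y) = nconv x `|` nconv y;
  nconvC : forall x y, nconv (ncomp x y) = ncomp (nconv y) (nconv x);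
  nid_l : forall x, ncomp nid x = x;
  nid_r : forall x, ncomp x nid = x;
  ncompU : forall x y z, ncomp x (y `|` z) = ncomp x y `|` ncomp x z;
  ncycle : forall x y z,
    (ncomp x y `&` nconv z == \bot) = (ncomp y z `&` nconv x == \bot)
}.

(* A finite multi-algebra indexed by a finite type I (I = 'I_m for
   A_1 × ... × A_m), with projection operators for all distinct i, j. *)
Unset Implicit Arguments.
Record malg (I : finType) := MAlg {
  alg : I -> nalg;
  proj : forall i j : I, ncar (alg i) -> ncar (alg j);
  projU : forall (i j : I) (r r' : ncar (alg i)), i != j ->
    proj i j (r `|` r') = proj i j r `|` proj i j r';
  projV : forall (i j : I) (r : ncar (alg i)), i != j ->
    proj i j (nconv r) = nconv (proj i j r)
}.

Arguments proj {I} m i j.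
Arguments projU {I} m i j r r'.
Arguments projV {I} m i j r.
Arguments alg {I} m i.
Set Implicit Arguments.

Section MultiAlgebra.
Variables (I : finType) (M : malg I).

Definition Rel := forall i : I, ncar (alg M i).

Definition relle (R R' : Rel) : Prop := forall i, R i <= R' i.
Definition relcomp (R R' : Rel) : Rel := fun i => ncomp (R i) (R' i).
Definition relmeet (R R' : Rel) : Rel := fun i => R i `&` R' i.
Definition relconv (R : Rel) : Rel := fun i => nconv (R i).

Definition proj_closed (R : Rel) : Prop :=
  forall i j, i != j -> R j <= proj M i j (R i).

Definition pstep (R : Rel) : Rel :=
  fun j => R j `&` \meet_(i | i != j) proj M i j (R i).

Definition alg_size : nat := (\sum_(i : I) #|ncar (alg M i)|)%N.

(* projection closure: iterate until the fixed point (reached after at most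
   alg_size rounds, since every non-trivial round strictly decreases some
   component). *)
Definition pclos (R : Rel) : Rel := iter alg_size pstep R.

Definition Network (E : finType) := E -> E -> Rel.

Definition is_network (S : Rel -> Prop) (E : finType) (N : Network E) : Prop :=
  forall x y, x != y -> S (N x y) /\ N y x = relconv (N x y).

Definition triv_incons (E : finType) (N : Network E) : Prop :=
  exists x y, x != y /\ exists i, N x y i = \bot.

Definition comp_closed (E : finType) (N : Network E) : Prop :=
  forall x y z, x != y -> y != z -> x != z ->
    relle (N x z) (relcomp (N x y) (N y z)).

Definition net_proj_closed (E : finType) (N : Network E) : Prop :=
  forall x y, x != y -> proj_closed (N x y).

Definition alg_consistent (E : finType) (N : Network E) : Prop :=
  [/\ comp_closed N, net_proj_closed N & ~ triv_incons N].

Definition cstep (E : finType) (N : Network E) : Network E :=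
  fun x z i => N x z i `&` \meet_(y | (y != x) && (y != z)) ncomp (N x y i) (N y z i).

Definition cclos (E : finType) (N : Network E) : Network E :=
  iter (#|E| * #|E| * alg_size)%N (@cstep E) N.

Definition dissociable (E : finType) (N : Network E) : Prop :=
  let N' := cclos (fun x y => pclos (N x y)) in
  alg_consistent N' \/ triv_incons N'.

Definition dissociable_set (S : Rel -> Prop) : Prop :=
  forall (E : finType) (N : Network E), is_network S N -> dissociable N.

Definition proj_closed_set (S : Rel -> Prop) : Prop :=
  forall R, S R -> S (pclos R).

Definition compmeet_closed_set (S : Rel -> Prop) : Prop :=
  forall R R' R'', S R -> S R' -> S R'' -> S (relmeet (relcomp R R') R'').

End MultiAlgebra.

(* Bi-slice A_{i,j}: the multi-algebra indexed by the two-element index set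
   {i, j}, with projections ⇂_i^j and ⇂_j^i. *)
Definition sub2 (I : finType) (i j : I) := {k : I | (k == i) || (k == j)}.

Lemma val_neq (I : finType) (i j : I) (k l : sub2 i j) :
  k != l -> val k != val l.
Proof. by apply: contra => /eqP /val_inj ->. Qed.

Definition bislice (I : finType) (M : malg I) (i j : I) : malg (sub2 i j) :=
  @MAlg (sub2 i j) (fun k => alg M (val k)) (fun k l => proj M (val k) (val l))
    (fun k l r r' h => projU M (val k) (val l) r r' (val_neq h))
    (fun k l r h => projV M (val k) (val l) r (val_neq h)).

Definition bislice_set (I : finType) (M : malg I) (S : Rel M -> Prop) (i j : I)
  : Rel (bislice M i j) -> Prop :=
  fun R' => exists R : Rel M, S R /\ forall k : sub2 i j, R' k = R (val k).

From HB Require Import structures.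
From mathcomp Require Import all_boot all_order.
From Stdlib Require Import Classical FunctionalExtensionality.

(* Let N' be the composition closure of N0, the edgewise projection closure of N,
   and assume N' is not trivially inconsistent.  Consider the networks K over S
   that are projection closed and lie between N' and N0; N0 is one of them.  If K
   is composition closed, it is N', since N' is the greatest composition-closed
   network below N0.  Otherwise K violates composition closure on some triangle;
   close K restricted to the triangle under composition.  The result lies above
   N', so it is not trivially inconsistent, and the hypothesis applied on each
   bi-slice shows that it is projection closed.  Patching it into K gives a
   strictly smaller network of the same kind, so the descent ends at N'. *)

Set Implicit Arguments.
Unset Strict Implicit.
Unset Printing Implicit Defensive.

Import Order.Theory.
Local Open Scope order_scope.

Section AlgebraLemmas.
Variable A : nalg.
Implicit Types a b : ncar A.

Lemma nconv_mono a b : a <= b -> nconv a <= nconv b.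
Proof. by move=> /join_idPr ab; apply/join_idPr; rewrite -nconvU ab. Qed.

Lemma nconv_le a b : (nconv a <= nconv b) = (a <= b).
Proof.
apply/idP/idP; last exact: nconv_mono.
by move=> /nconv_mono; rewrite !nconvK.
Qed.

Lemma ncomp_monor a b b' : b <= b' -> ncomp a b <= ncomp a b'.
Proof. by move=> /join_idPr bb'; apply/join_idPr; rewrite -ncompU bb'. Qed.

Lemma ncomp_monol a a' b : a <= a' -> ncomp a b <= ncomp a' b.
Proof.
have ncompE x y : ncomp x y = nconv (ncomp (nconv y) (nconv x)) by rewrite nconvC !nconvK.
by move=> aa'; rewrite ncompE [ncomp a' b]ncompE nconv_le ncomp_monor ?nconv_le.
Qed.

Lemma ncomp_mono a a' b b' : a <= a' -> b <= b' -> ncomp a b <= ncomp a' b'.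
Proof. by move=> aa' bb'; apply: le_trans (ncomp_monol _ aa') (ncomp_monor _ bb'). Qed.

Lemma nconvI a b : nconv (a `&` b) = nconv a `&` nconv b.
Proof.
apply: le_anti; rewrite lexI !nconv_mono ?leIl ?leIr //=.
by rewrite -nconv_le nconvK lexI -{2}(nconvK a) -{3}(nconvK b) !nconv_mono ?leIl ?leIr.
Qed.

Lemma nconvT : nconv (\top : ncar A) = \top.
Proof. by apply: le_anti; rewrite lex1 /= -{1}(nconvK \top) nconv_mono ?lex1. Qed.

Lemma nconv_meet (J : Type) (r : seq J) (P : pred J) (F : J -> ncar A) :
  nconv (\meet_(y <- r | P y) F y) = \meet_(y <- r | P y) nconv (F y).
Proof. by elim/big_rec2: _ => [|y u v _ <-]; [exact: nconvT | exact: nconvI]. Qed.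

End AlgebraLemmas.

Section PotentialIteration.
Variables (X : Type) (f : X -> X) (phi : X -> nat).
Hypothesis phi_decr : forall x, f x <> x -> (phi (f x) < phi x)%N.

Lemma iter_potential_fix n x : (phi x <= n)%N -> f (iter n f x) = iter n f x.
Proof.
elim: n x => [|n IH] x phix; case: (classic (f x = x)) => [fx|/phi_decr lt].
- by [].
- by move: (leq_trans lt phix); rewrite ltn0.
- by rewrite iter_fix.
- by rewrite iterSr; apply: IH; rewrite -ltnS (leq_trans lt phix).
Qed.

Lemma iter_potential_stable n n' x :
  (phi x <= n)%N -> (phi x <= n')%N -> iter n f x = iter n' f x.
Proof.
wlog nn' : n n' / (n <= n')%N => [wlog_nn'|phin _].
  by case: (leqP n n') => [|/ltnW] nn' phin phin'; last symmetry; apply: wlog_nn'.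
by rewrite -(subnK nn') iterD [RHS]iter_fix // iter_potential_fix.
Qed.

End PotentialIteration.

Lemma card_down_lt (d : Order.disp_t) (T : finPOrderType d) (r r' : T) :
  r < r' -> (#|[pred s | (s <= r)%O]| < #|[pred s | (s <= r')%O]|)%N.
Proof.
move=> /[dup] /ltW rr' /lt_geF r'r; apply: proper_card; apply/properP; split.
  by apply/subsetP => s; rewrite !inE => /le_trans; apply.
by exists r'; rewrite !inE ?lexx ?r'r.
Qed.

Lemma card_down_le (d : Order.disp_t) (T : finPOrderType d) (r r' : T) :
  r <= r' -> (#|[pred s | (s <= r)%O]| <= #|[pred s | (s <= r')%O]|)%N.
Proof. by rewrite le_eqVlt => /predU1P [-> // | /card_down_lt /ltnW]. Qed.

Lemma exists_neq (T : Type) (U : T -> Type) (f g : forall t, U t) :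
  f <> g -> exists t, f t <> g t.
Proof. by move=> neq; apply: not_all_ex_not => h; apply/neq/functional_extensionality_dep. Qed.

Lemma ltn_sum_ex (T : finType) (F G : T -> nat) :
  (forall t, F t <= G t)%N -> (exists t, F t < G t)%N -> (\sum_t F t < \sum_t G t)%N.
Proof.
move=> FG [t lt_t]; rewrite (bigD1 t) // [X in (_ < X)%N](bigD1 t) //=.
by rewrite -addSn leq_add ?leq_sum.
Qed.

Section Weight.
Variables (I : finType) (M : malg I).

Lemma relle_trans (R1 R2 R3 : Rel M) : relle R1 R2 -> relle R2 R3 -> relle R1 R3.
Proof. by move=> h12 h23 i; apply: le_trans (h12 i) (h23 i). Qed.

Definition rel_weight (R : Rel M) : nat := (\sum_i #|[pred s | (s <= R i)%O]|)%N.

Lemma rel_weight_le R R' : relle R R' -> (rel_weight R <= rel_weight R')%N.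
Proof. by move=> RR'; apply: leq_sum => i _; apply: card_down_le. Qed.

Lemma rel_weight_lt R R' : relle R R' -> R <> R' -> (rel_weight R < rel_weight R')%N.
Proof.
move=> RR' neq; have [i /eqP neq_i] := exists_neq neq.
apply: ltn_sum_ex => [j|]; first exact: card_down_le.
by exists i; rewrite card_down_lt // lt_neqAle neq_i RR'.
Qed.

Lemma rel_weight_max R : (rel_weight R <= alg_size M)%N.
Proof. by apply: leq_sum => i _; apply: max_card. Qed.

Variable E : finType.

Definition net_weight (N : Network M E) : nat :=
  (\sum_x \sum_z rel_weight (N x z))%N.

Lemma net_weight_lt (N N' : Network M E) :
  (forall x z, relle (N x z) (N' x z)) -> N <> N' -> (net_weight N < net_weight N')%N.
Proof.
move=> NN' neq; have [x neq_x] := exists_neq neq; have [z neq_xz] := exists_neq neq_x.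
apply: ltn_sum_ex => [y|]; first by apply: leq_sum => t _; apply: rel_weight_le.
exists x; apply: ltn_sum_ex => [t|]; first exact: rel_weight_le.
by exists z; apply: rel_weight_lt.
Qed.

Lemma net_weight_max N : (net_weight N <= #|E| * #|E| * alg_size M)%N.
Proof.
rewrite /net_weight -mulnA -sum_nat_const; apply: leq_sum => x _.
by rewrite -sum_nat_const; apply: leq_sum => z _; apply: rel_weight_max.
Qed.

End Weight.

Section ProjectionClosure.
Variables (I : finType) (M : malg I).
Implicit Types R : Rel M.

Lemma pstep_le R : relle (pstep R) R.
Proof. by move=> i; apply: leIl. Qed.

Lemma pclos_pstep R : pstep (pclos R) = pclos R.
Proof.
apply: (iter_potential_fix (phi := @rel_weight _ M)) (rel_weight_max R) => S neq.
exact: rel_weight_lt (pstep_le S) neq.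
Qed.

Lemma pstep_id R : pstep R = R <-> proj_closed R.
Proof.
split=> [fixR i j nij | closedR].
  rewrite -{1}fixR.
  by apply: le_trans (leIr _ _) _; apply: meets_inf.
apply: functional_extensionality_dep => j.
by apply/meet_idPl; apply: meets_ge => i nij; apply: closedR.
Qed.

Lemma pclos_proj_closed R : proj_closed (pclos R).
Proof. by apply/pstep_id; apply: pclos_pstep. Qed.

Lemma pclos_id R : proj_closed R -> pclos R = R.
Proof. by move=> /pstep_id fixR; rewrite /pclos iter_fix. Qed.

Lemma pclos_conv R : pclos (relconv R) = relconv (pclos R).
Proof.
rewrite /pclos; elim: (alg_size M) => [|n IH] //=; rewrite IH.
apply: functional_extensionality_dep => j.
rewrite /pstep /relconv nconvI nconv_meet; congr (_ `&` _).
by apply: eq_bigr => i nij; rewrite projV // eq_sym.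
Qed.

End ProjectionClosure.

Section CompositionClosure.
Variables (I : finType) (M : malg I) (E : finType).
Implicit Types N L : Network M E.

Lemma cstep_le N x z : relle (cstep N x z) (N x z).
Proof. by move=> i; apply: leIl. Qed.

Lemma cclos_le N x z : relle (cclos N x z) (N x z).
Proof.
rewrite /cclos; elim: (_ * _)%N => [|n IH] //=.
exact: relle_trans (cstep_le _ _ _) IH.
Qed.

Lemma cstep_weight N : cstep N <> N -> (net_weight (cstep N) < net_weight N)%N.
Proof. by apply: net_weight_lt => x z; apply: cstep_le. Qed.

Lemma cclos_iter N n : (net_weight N <= n)%N -> cclos N = iter n (@cstep _ _ E) N.
Proof. exact/iter_potential_stable/net_weight_max/cstep_weight. Qed.

Lemma cclos_comp_closed N : comp_closed (cclos N).
Proof.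
have fixN : cstep (cclos N) = cclos N.
  exact: iter_potential_fix cstep_weight _ _ (net_weight_max N).
move=> x y z nxy nyz nxz i; rewrite -{1}fixN.
by apply: le_trans (leIr _ _) _; apply: meets_inf; rewrite eq_sym nxy nyz.
Qed.

Lemma not_comp_closed N : ~ comp_closed N -> exists x y z,
  [/\ x != y, y != z, x != z & ~ relle (N x z) (relcomp (N x y) (N y z))].
Proof.
move=> notN; apply: NNPP => none; apply: notN => x y z nxy nyz nxz.
by apply: NNPP => notxyz; apply: none; exists x, y, z.
Qed.

Lemma cclos_greatest N L : comp_closed L ->
  (forall x z, x != z -> relle (L x z) (N x z)) ->
  forall x z, x != z -> relle (L x z) (cclos N x z).
Proof.
move=> closedL; rewrite /cclos; elim: (_ * _)%N N => [|n IH] N LN //= x z nxz i.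
rewrite lexI IH //=; apply: meets_ge => y /andP [nyx nyz].
apply: le_trans (closedL x y z _ nyz nxz i) _; first by rewrite eq_sym.
by apply: ncomp_mono; apply: IH => //; rewrite eq_sym.
Qed.

Lemma cclos_offdiag N L : (forall x z, x != z -> N x z = L x z) ->
  forall x z, x != z -> cclos N x z = cclos L x z.
Proof.
rewrite /cclos; elim: (_ * _)%N => [|n IH] //= NL x z nxz.
apply: functional_extensionality_dep => i; rewrite /cstep IH //; congr (_ `&` _).
by apply: eq_bigr => y /andP [nyx nyz]; rewrite !IH // eq_sym.
Qed.

Section NetworkClosure.
Variable S : Rel M -> Prop.
Hypothesis closedS : compmeet_closed_set S.

Lemma compmeet_closed_meets (A : Rel M) (s : seq E) (P : pred E) (F G : E -> Rel M) :
  S A -> (forall y, P y -> S (F y) /\ S (G y)) ->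
  S (fun i => A i `&` \meet_(y <- s | P y) ncomp (F y i) (G y i)).
Proof.
move=> + FG; elim: s A => [|y s IH] A SA.
  suff -> : (fun i => A i `&` \meet_(y <- [::] | P y) ncomp (F y i) (G y i)) = A by [].
  by apply: functional_extensionality_dep => i; rewrite big_nil meetx1.
case Py : (P y); last first.
  suff -> : (fun i => A i `&` \meet_(y0 <- y :: s | P y0) ncomp (F y0 i) (G y0 i)) =
    (fun i => A i `&` \meet_(y0 <- s | P y0) ncomp (F y0 i) (G y0 i)) by exact: IH.
  by apply: functional_extensionality_dep => i; rewrite big_cons Py.
suff -> : (fun i => A i `&` \meet_(y0 <- y :: s | P y0) ncomp (F y0 i) (G y0 i)) =
  (fun i => relmeet (relcomp (F y) (G y)) A i `&`
            \meet_(y0 <- s | P y0) ncomp (F y0 i) (G y0 i)).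
  by apply: IH; have [SF SG] := FG y Py; apply: closedS.
apply: functional_extensionality_dep => i.
by rewrite big_cons Py /relmeet /relcomp meetA [ncomp _ _ `&` A i]meetC.
Qed.

Lemma cstep_network N : is_network S N -> is_network S (cstep N).
Proof.
move=> netN x z nxz; have [SN symN] := netN x z nxz; split.
  apply: compmeet_closed_meets => // y /andP [nyx nyz].
  by split; [case: (netN x y) => //; rewrite eq_sym | case: (netN y z)].
apply: functional_extensionality_dep => i.
rewrite /cstep /relconv nconvI nconv_meet symN; congr (_ `&` _).
rewrite [in RHS](eq_bigl (fun y => (y != z) && (y != x))) => [|y]; last by rewrite andbC.
apply: eq_bigr => y /andP [nyz nyx].
have [_ ->] := netN y z nyz; have [|_ ->] := netN x y; first by rewrite eq_sym.
by rewrite /relconv nconvC.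
Qed.

Lemma cclos_network N : is_network S N -> is_network S (cclos N).
Proof. by rewrite /cclos; elim: (_ * _)%N => [|n IH] //= /IH /cstep_network. Qed.

End NetworkClosure.

End CompositionClosure.

Section BisliceRestriction.
Variables (I : finType) (M : malg I) (E : finType) (i j : I).

Definition bisrel (R : Rel M) : Rel (bislice M i j) := fun k => R (val k).

Definition bisnet (N : Network M E) : Network (bislice M i j) E :=
  fun x y => bisrel (N x y).

Lemma bisrel_proj_closed R : proj_closed R -> proj_closed (bisrel R).
Proof. by move=> closedR k l nkl; apply/closedR/val_neq. Qed.

Lemma bisrel_proj_closed_le R : i != j -> proj_closed (bisrel R) -> R j <= proj M i j (R i).
Proof.
move=> nij closedR.
have ki : (i == i) || (i == j) by rewrite eqxx.
have kj : (j == i) || (j == j) by rewrite eqxx orbT.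
by apply: (closedR (exist _ i ki) (exist _ j kj)); rewrite -val_eqE.
Qed.

Lemma iter_cstep_bisnet n N :
  iter n (@cstep _ _ E) (bisnet N) = bisnet (iter n (@cstep _ _ E) N).
Proof. by elim: n => //= n ->. Qed.

(* The two closures iterate a number of times depending on the algebra; any count
   above the weight reaches the same fixed point. *)
Lemma cclos_bisnet N : cclos (bisnet N) = bisnet (cclos N).
Proof.
set n := (net_weight (bisnet N) + net_weight N)%N.
rewrite (@cclos_iter _ _ _ N n) ?leq_addl // (cclos_iter (n := n)) ?leq_addr //.
exact: iter_cstep_bisnet.
Qed.

End BisliceRestriction.

Arguments bisnet {I M E} i j N.

Section BisliceConsistency.
Variables (I : finType) (M : malg I) (S : Rel M -> Prop) (E : finType).
Hypothesis bislice_dissociable : forall i j : I, i != j ->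
  forall N : Network (bislice M i j) E, is_network (@bislice_set _ M S i j) N -> dissociable N.

Lemma cclos_net_proj_closed (N : Network M E) : is_network S N -> net_proj_closed N ->
  ~ triv_incons (cclos N) -> net_proj_closed (cclos N).
Proof.
move=> netN closedN consN x y nxy i j nij.
have netNij : is_network (@bislice_set _ M S i j) (bisnet i j N).
  move=> a b nab; have [SN symN] := netN a b nab.
  by split; [exists (N a b) | rewrite /bisnet /bisrel symN].
(* Dissociability first applies the projection closure, which only changes the
   diagonal here; the diagonal does not influence [cclos] off the diagonal. *)
have offdiagNij a b : a != b -> cclos (fun a b => pclos (bisnet i j N a b)) a b =
                                 bisnet i j (cclos N) a b.
  rewrite -cclos_bisnet; apply: cclos_offdiag => {}a {}b nab.
  exact/pclos_id/bisrel_proj_closed/closedN.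
case: (bislice_dissociable nij netNij) => [[_ closedNij _] | [a [b [nab [k Nk]]]]].
  by apply: bisrel_proj_closed_le => //; move: (closedNij x y nxy); rewrite offdiagNij.
by case: consN; exists a, b; split=> //; exists (val k); rewrite -Nk offdiagNij.
Qed.

End BisliceConsistency.

Section Subnetwork.
Variables (I : finType) (M : malg I) (E : finType) (X : {set E}).
Local Notation V := {u : E | u \in X}.

Definition subnet (N : Network M E) : Network M V := fun a b => N (val a) (val b).

Lemma subnet_network S N : is_network S N -> is_network S (subnet N).
Proof. by move=> netN a b nab; apply: netN; rewrite val_eqE. Qed.

Lemma subnet_net_proj_closed N : net_proj_closed N -> net_proj_closed (subnet N).
Proof. by move=> closedN a b nab; apply: closedN; rewrite val_eqE. Qed.

Lemma subnet_comp_closed N : comp_closed N -> comp_closed (subnet N).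
Proof. by move=> closedN a b c nab nbc nac; apply: closedN; rewrite val_eqE. Qed.

Definition patch (K : Network M E) (C : Network M V) : Network M E :=
  fun u v => if insub u is Some a then if insub v is Some b then C a b else K u v
             else K u v.

Variables (K : Network M E) (C : Network M V).

Variant patch_spec (u v : E) : Rel M -> Type :=
  | PatchSub (a b : V) of val a = u & val b = v : patch_spec u v (C a b)
  | PatchKeep : patch_spec u v (K u v).

Lemma patchP u v : patch_spec u v (patch K C u v).
Proof.
rewrite /patch; case: insubP => [a _ <-|_]; last exact: PatchKeep.
by case: insubP => [b _ <-|_]; [apply: PatchSub | apply: PatchKeep].
Qed.

Lemma patch_val a b : patch K C (val a) (val b) = C a b.
Proof. by rewrite /patch !valK. Qed.

Lemma patch_le : (forall a b, relle (C a b) (K (val a) (val b))) ->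
  forall u v, relle (patch K C u v) (K u v).
Proof. by move=> CK u v; case: patchP => [a b <- <-|]. Qed.

Lemma patch_network S : is_network S K -> is_network S C -> is_network S (patch K C).
Proof.
move=> netK netC u v; rewrite /patch.
case: insubP => [a _ <-|_]; case: insubP => [b _ <-|_]; try exact: netK.
by rewrite val_eqE; apply: netC.
Qed.

Lemma patch_net_proj_closed :
  net_proj_closed K -> net_proj_closed C -> net_proj_closed (patch K C).
Proof.
move=> closedK closedC u v; case: patchP => [a b <- <-|]; last exact: closedK.
by rewrite val_eqE; apply: closedC.
Qed.

End Subnetwork.

Arguments subnet {I M E} X N.

Lemma patch_closure_lt (I : finType) (M : malg I) (E : finType) (X : {set E})
    (K : Network M E) x y z (xX : x \in X) (yX : y \in X) (zX : z \in X) :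
  x != y -> y != z -> x != z -> ~ relle (K x z) (relcomp (K x y) (K y z)) ->
  (net_weight (patch K (cclos (subnet X K))) < net_weight K)%N.
Proof.
move=> nxy nyz nxz notxyz.
apply: net_weight_lt => [|eqK]; first by apply: patch_le => a b; apply: cclos_le.
pose a : {u | u \in X} := exist _ x xX; pose b : {u | u \in X} := exist _ y yX.
pose c : {u | u \in X} := exist _ z zX.
apply: notxyz; have := patch_val K (cclos (subnet X K)) a c; rewrite eqK /= => -> i.
apply: le_trans (@cclos_comp_closed _ _ _ (subnet X K) a b c _ _ _ i) _; rewrite -?val_eqE //.
by apply: ncomp_mono; apply: cclos_le.
Qed.

Section Descent.
Variables (I : finType) (M : malg I) (S : Rel M -> Prop).
Hypothesis closedS : compmeet_closed_set S.
Hypothesis bislice3_dissociable : forall i j : I, i != j ->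
  forall E : finType, #|E| = 3 ->
  forall N : Network (bislice M i j) E, is_network (@bislice_set _ M S i j) N -> dissociable N.
Variables (E : finType) (N0 : Network M E).
Hypothesis consN0 : ~ triv_incons (cclos N0).

Definition sandwiched (K : Network M E) :=
  [/\ is_network S K, net_proj_closed K,
      forall x y, x != y -> relle (cclos N0 x y) (K x y) &
      forall x y, x != y -> relle (K x y) (N0 x y)].

Lemma sandwiched_comp_closed K :
  sandwiched K -> comp_closed K -> net_proj_closed (cclos N0).
Proof.
case=> _ closedK N0K KN0 compK x y nxy.
suff -> : cclos N0 x y = K x y by apply: closedK.
apply: functional_extensionality_dep => i; apply: le_anti.
by rewrite N0K // (cclos_greatest compK KN0).
Qed.

Lemma sandwiched_patch K (X : {set E}) :
  sandwiched K -> #|X| = 3 -> sandwiched (patch K (cclos (subnet X K))).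
Proof.
case=> netK closedK N0K KN0 X3; set C := cclos (subnet X K).
have N0C : forall a b, a != b -> relle (subnet X (cclos N0) a b) (C a b).
  apply: cclos_greatest => [|a b nab]; first exact/subnet_comp_closed/cclos_comp_closed.
  by apply: N0K; rewrite val_eqE.
have closedC : net_proj_closed C.
  apply: cclos_net_proj_closed (subnet_network netK) (subnet_net_proj_closed closedK) _.
    by move=> i j nij; apply: bislice3_dissociable; rewrite // card_sig.
  case=> a [b [nab [i Ci]]]; apply: consN0; exists (val a), (val b).
  split; first by rewrite val_eqE.
  by exists i; apply/eqP; rewrite -lex0 -Ci; apply: N0C.
split.
- exact/patch_network/cclos_network/subnet_network.
- exact: patch_net_proj_closed.
- by move=> u v; case: patchP => [a b <- <-|]; [rewrite val_eqE; apply: N0C | apply: N0K].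
- move=> u v nuv; apply: relle_trans (KN0 u v nuv).
  by apply: patch_le => a b; apply: cclos_le.
Qed.

Lemma sandwiched_net_proj_closed K : sandwiched K -> net_proj_closed (cclos N0).
Proof.
move: {2}(net_weight K).+1 (ltnSn (net_weight K)) => n.
elim: n K => [|n IH] K // ltKn sandK.
case: (classic (comp_closed K)) => [|/not_comp_closed [x [y [z [nxy nyz nxz notxyz]]]]].
  exact: sandwiched_comp_closed.
have X3 : #|x |: [set y; z]| = 3.
  by rewrite cardsU1 cards2 in_set2 (negbTE nxy) (negbTE nxz) nyz.
apply: (IH _ _ (sandwiched_patch sandK X3)); rewrite ltnS in ltKn.
apply: leq_trans _ ltKn; apply: (patch_closure_lt (x := x) (y := y) (z := z));
  by rewrite ?inE ?eqxx ?orbT.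
Qed.

End Descent.

Theorem proposition6p6 (m : nat) (M : malg 'I_m) (S : Rel M -> Prop) :
  proj_closed_set S ->
  compmeet_closed_set S ->
  (forall i j : 'I_m, i != j ->
     forall (E : finType), #|E| = 3 ->
     forall N : Network (bislice M i j) E,
       is_network (@bislice_set _ M S i j) N -> dissociable N) ->
  dissociable_set S.
Proof.
move=> closedPS closedCS bislice3 E N netN.
set N0 := fun x y => pclos (N x y).
have [incons|cons] := classic (triv_incons (cclos N0)); [by right | left].
split=> //; first exact: cclos_comp_closed.
apply: (sandwiched_net_proj_closed closedCS bislice3 cons (K := N0)); split.
- move=> x y nxy; have [SN symN] := netN x y nxy.
  by split; [apply: closedPS | rewrite /N0 symN pclos_conv].
- by move=> x y _; apply: pclos_proj_closed.
- by move=> x y _; apply: cclos_le.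
- by move=> x y _.
Qed.
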